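(* Let $\Gamma$ be a connected finite simple graph on $N\ge3$ vertices with $\varepsilon>\frac12$. Then for every vertex $v$ there exists $w\in\mathcal N(v)$ with $\deg w\le3$.
   Context: For a finite simple graph $\Gamma=(V,E)$ without isolated vertices, $\deg v$ is the number of neighbours of $v$ and $\mathcal N(v)=\{w\in V: w\sim v\}$. The normalized Laplacian acts on functions $f:V\to\mathbb R$ by $\Delta f(v)=f(v)-\frac{1}{\deg v}\sum_{w\sim v}f(w)$; its eigenvalues are $0=\lambda_1\le\lambda_2\le\dots\le\lambda_N$, and $\varepsilon:=\min_i|1-\lambda_i|$. *)

From HB Require Import structures.
From mathcomp Require Import all_boot all_order all_algebra.
From mathcomp Require Import reals.
Set Implicit Arguments. Unset Strict Implicit. Unset Printing Implicit Defensive.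
Import Order.TTheory GRing.Theory Num.Theory.
Local Open Scope ring_scope.

Definition simple_graph (n : nat) (adj : rel 'I_n) : Prop :=
  symmetric adj /\ irreflexive adj.

Definition connected_graph (n : nat) (adj : rel 'I_n) : Prop :=
  forall x y : 'I_n, connect adj x y.

Definition deg (n : nat) (adj : rel 'I_n) (v : 'I_n) : nat :=
  #|[set w | adj v w]|.

(* matrix of the normalized Laplacian
   (Delta f)(v) = f v - (1/deg v) sum_{w ~ v} f w *)
Definition nlap (R : fieldType) (n : nat) (adj : rel 'I_n) : 'M[R]_n :=
  \matrix_(i, j) ((i == j)%:R - (adj i j)%:R / (deg adj i)%:R).

From mathcomp Require Import all_boot all_order all_algebra.
From mathcomp Require Import reals.
From mathcomp Require Import spectral sesquilinear complex.
From mathcomp Require Import ring lra.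
Import Order.TTheory GRing.Theory Num.Theory.
Set Implicit Arguments. Unset Strict Implicit.
Local Open Scope ring_scope.

(* If every neighbour w of v had degree at least 4, the row of v in the
   symmetric normalized adjacency matrix S = D^-1/2 A D^-1/2 would have
   squared Euclidean norm sum_(w ~ v) 1 / (deg v * deg w) <= 1/4.  Expanding
   the unit vector e_v in an orthonormal eigenbasis of the real symmetric
   matrix S then yields an eigenvalue k of S with k^2 <= 1/4.  As S is similar
   to 1 - nlap, 1 - k is an eigenvalue of the normalized Laplacian with
   |1 - (1 - k)| <= 1/2, contradicting epsilon > 1/2. *)

Lemma exists_le_weighted_mean (R : numDomainType) (I : finType) (w a : I -> R) (c : R) :
  (forall i, 0 <= w i) -> (exists i, w i != 0) ->
  (forall i, a i \is Num.real) -> c \is Num.real ->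
  \sum_i w i * a i <= c * \sum_i w i -> exists i, a i <= c.
Proof.
move=> w_ge0 [i0 wi0_neq0] a_real c_real le_mean.
apply/existsP; apply: contraT; rewrite negb_exists => /forallP a_gt_c.
have {}a_gt_c i : 0 < a i - c by rewrite subr_gt0 real_ltNge ?a_gt_c.
have sum0 : \sum_i w i * (a i - c) = 0.
  apply/le_anti; rewrite sumr_ge0 ?andbT => [|i _]; last first.
    by rewrite mulr_ge0 ?w_ge0 ?ltW.
  under eq_bigr do rewrite mulrBr.
  by rewrite sumrB -mulr_suml [_ * c]mulrC subr_le0.
have := psumr_eq0P (fun i _ => mulr_ge0 (w_ge0 i) (ltW (a_gt_c i))) sum0 (i := i0).
by move=> /(_ isT) /eqP; rewrite mulf_eq0 (negbTE wi0_neq0) gt_eqF.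
Qed.

Section NormalMatrix.
Variables (C : numClosedFieldType) (n : nat).
Local Open Scope sesquilinear_scope.

Lemma dotmx_sum_norm (u : 'rV[C]_n) : dotmx u u = \sum_j `|u 0 j| ^+ 2.
Proof. by rewrite dotmxE mxE; apply: eq_bigr => j _; rewrite !mxE normCK. Qed.

Lemma dotmx_mulmx_unitary (u : 'rV[C]_n) (U : 'M[C]_n) :
  U \is unitarymx -> dotmx (u *m U) (u *m U) = dotmx u u.
Proof.
move=> /unitarymxP U_unitary.
by rewrite !dotmxE trmx_mul map_mxM mulmxA -(mulmxA u) U_unitary mulmx1.
Qed.

Lemma eigenvalue_spectral_diag (A : 'M[C]_n) j :
  A \is normalmx -> eigenvalue A (spectral_diag A 0 j).
Proof.
move=> /orthomx_spectralP; have := spectral_unit A.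
move: (spectralmx A) (spectral_diag A) => U d U_unit ->.
pose e : 'rV[C]_n := delta_mx 0 j.
apply/eigenvalueP; exists (e *m U).
  have diag_delta : e *m diag_mx d = d 0 j *: e.
    apply/rowP => i; rewrite mul_mx_diag !mxE.
    by case: (eqVneq i j) => [->|_]; rewrite eqxx /= ?mulr0 ?mul0r // mulrC.
  by rewrite !mulmxA mulmxK // diag_delta scalemxAl.
rewrite mulmx_free_eq0 ?row_free_unit //.
by apply/eqP => /matrixP /(_ 0 j); rewrite !mxE !eqxx => /eqP; rewrite oner_eq0.
Qed.

(* In the eigenbasis of [A] the hypothesis says that a weighted mean of the
   [|d_j|^2] is at most [c]. *)
Lemma normalmx_spectral_diag_norm_le (A : 'M[C]_n) (u : 'rV[C]_n) (c : C) :
  A \is normalmx -> u != 0 -> c \is Num.real ->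
  dotmx (u *m A) (u *m A) <= c * dotmx u u ->
  exists j, `|spectral_diag A 0 j| ^+ 2 <= c.
Proof.
move=> /orthomx_spectralP; have := spectral_unitarymx A.
move: (spectralmx A) (spectral_diag A) => U d U_unitary A_eq u_neq0 c_real.
have U_unit := unitarymx_unit U_unitary.
pose y := u *m invmx U.
have yU : u = y *m U by rewrite mulmxKV.
clearbody y.
have -> : u *m A = y *m diag_mx d *m U by rewrite A_eq {1}yU !mulmxA mulmxK.
have -> : dotmx u u = dotmx y y by rewrite {1 2}yU dotmx_mulmx_unitary.
rewrite dotmx_mulmx_unitary // !dotmx_sum_norm.
under eq_bigr do rewrite mul_mx_diag mxE normrM exprMn.
apply: exists_le_weighted_mean => [j||j|] //.
- by rewrite exprn_ge0.
- have y_neq0 : y != 0 by apply: contraNneq u_neq0 => y0; rewrite yU y0 mul0mx.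
  have [j yj_neq0] : exists j, y 0 j != 0.
    apply/existsP; apply: contraNT y_neq0 => /existsPn y0.
    by apply/eqP/rowP => j; rewrite mxE; apply/eqP/negPn; exact: y0.
  by exists j; rewrite sqrf_eq0 normr_eq0.
- by rewrite realX ?normr_real.
Qed.

End NormalMatrix.

Lemma symmetric_eigenvalue_sqr_le (R : rcfType) n (S : 'M[R]_n) (x : 'rV[R]_n) (c : R) :
  S^T = S -> x != 0 ->
  \sum_j ((x *m S) 0 j) ^+ 2 <= c * \sum_j (x 0 j) ^+ 2 ->
  exists2 k, eigenvalue S k & k ^+ 2 <= c.
Proof.
move=> S_sym x_neq0 le_xS.
(* Complexify to use the spectral theorem; [S ^ phi] is hermitian, so the
   eigenvalue found is real. *)
pose phi : {rmorphism R -> R[i]} := real_complex R.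
have phi_real r : phi r \is Num.real by apply/complex_realP; exists r.
have dotmx_phi (r : 'rV[R]_n) :
    dotmx (map_mx phi r) (map_mx phi r) = phi (\sum_j r 0 j ^+ 2).
  rewrite dotmx_sum_norm rmorph_sum; apply: eq_bigr => j _.
  by rewrite mxE real_normK ?rmorphXn.
have S_herm : map_mx phi S \is hermsymmx.
  apply: realsym_hermsym; last by apply/mxOverP => i j; rewrite mxE.
  by rewrite qualifE expr0 scale1r map_mx_id // map_trmx S_sym.
have xphi_neq0 : map_mx phi x != 0 by rewrite map_mx_eq0.
have le_xSphi : dotmx (map_mx phi x *m map_mx phi S) (map_mx phi x *m map_mx phi S)
    <= phi c * dotmx (map_mx phi x) (map_mx phi x).
  by rewrite -map_mxM !dotmx_phi -rmorphM lecR.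
have [j le_dj] := normalmx_spectral_diag_norm_le (hermitian_normalmx S_herm)
  xphi_neq0 (phi_real c) le_xSphi.
set d := spectral_diag _ 0 j in le_dj.
have d_real : d \is Num.real := mxOverP (hermitian_spectral_diag_real S_herm) 0 j.
exists (complex.Re d).
  rewrite -(eigenvalue_map phi) /= RRe_real //.
  exact/eigenvalue_spectral_diag/hermitian_normalmx.
by rewrite -lecR rmorphXn /= RRe_real // -real_normK.
Qed.

Lemma symmetric_row_eigenvalue_sqr_le (R : rcfType) n (S : 'M[R]_n) i (c : R) :
  S^T = S -> \sum_j (S i j) ^+ 2 <= c -> exists2 k, eigenvalue S k & k ^+ 2 <= c.
Proof.
move=> S_sym le_row; pose e : 'rV[R]_n := delta_mx 0 i.
have e_neq0 : e != 0.
  by apply/eqP => /matrixP /(_ 0 i); rewrite !mxE !eqxx => /eqP; rewrite oner_eq0.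
apply: (symmetric_eigenvalue_sqr_le S_sym e_neq0).
have -> : \sum_j (e 0 j) ^+ 2 = 1.
  rewrite (bigD1 i) //= big1 => [|j ji]; rewrite mxE ?(negbTE ji) ?andbF ?expr0n //.
  by rewrite !eqxx expr1n addr0.
by rewrite -rowE mulr1; under eq_bigr do rewrite mxE.
Qed.

Lemma connected_deg_gt0 n (adj : rel 'I_n) :
  connected_graph adj -> (1 < n)%N -> forall i, (0 < deg adj i)%N.
Proof.
move=> adj_conn n_gt1 i.
have [j] : exists j, j \in [set~ i].
  by apply/set0Pn; rewrite -card_gt0 cardsC1 card_ord -ltnS prednK // ltnW.
rewrite !inE => ji; case/connectP: (adj_conn i j) => [[|k p]] /= path_ij last_j.
  by rewrite last_j eqxx in ji.
by case/andP: path_ij => adj_ik _; apply/card_gt0P; exists k; rewrite inE.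
Qed.

Lemma sum_adj_deg (R : pzSemiRingType) n (adj : rel 'I_n) v :
  \sum_j (adj v j)%:R = (deg adj v)%:R :> R.
Proof.
rewrite /deg -sum1_card natr_sum [RHS]big_mkcond /=.
by apply: eq_bigr => j _; rewrite inE; case: (adj v j).
Qed.

(* The symmetric normalized adjacency matrix D^-1/2 A D^-1/2; conjugating it
   by D^1/2 gives 1 - nlap. *)
Definition sym_norm_adj (R : rcfType) n (adj : rel 'I_n) : 'M[R]_n :=
  \matrix_(i, j) ((adj i j)%:R / (Num.sqrt (deg adj i)%:R * Num.sqrt (deg adj j)%:R)).

Section SymNormAdj.
Variables (R : rcfType) (n : nat) (adj : rel 'I_n).

Lemma trmx_sym_norm_adj :
  symmetric adj -> (sym_norm_adj R adj)^T = sym_norm_adj R adj.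
Proof.
by move=> adj_sym; apply/matrixP => i j; rewrite !mxE adj_sym (mulrC (Num.sqrt _)).
Qed.

Lemma eigenvalue_nlap_sym_norm_adj (k : R) :
  (forall i, (0 < deg adj i)%N) ->
  eigenvalue (sym_norm_adj R adj) k -> eigenvalue (nlap R adj) (1 - k).
Proof.
move=> deg_gt0 /eigenvalueP [u uS u_neq0].
pose s i : R := Num.sqrt (deg adj i)%:R.
have s_gt0 i : 0 < s i by rewrite sqrtr_gt0 ltr0n.
have deg_sqr i : (deg adj i)%:R = s i ^+ 2 by rewrite sqr_sqrtr // ler0n.
have uS_j j : \sum_i u 0 i * sym_norm_adj R adj i j = k * u 0 j.
  by have := congr1 (fun M : 'rV_n => M 0 j) uS; rewrite !mxE.
apply/eigenvalueP; exists (\row_j (u 0 j * s j)).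
  apply/rowP => j; rewrite !mxE.
  under eq_bigr => i _.
    have -> : (\row_j (u 0 j * s j)) 0 i * nlap R adj i j
        = u 0 i * s i * (i == j)%:R - s j * (u 0 i * sym_norm_adj R adj i j).
      rewrite !mxE -/(s i) -/(s j) deg_sqr; have := s_gt0 i; have := s_gt0 j.
      by move=> ? ?; field; rewrite ?gt_eqF.
    over.
  rewrite sumrB -mulr_sumr uS_j (bigD1 j) //= eqxx mulr1 big1 ?addr0.
    by rewrite -/(s j); ring.
  by move=> i /negbTE ->; rewrite mulr0.
apply: contra u_neq0 => /eqP us0; apply/eqP/rowP => j.
have /eqP := congr1 (fun M : 'rV_n => M 0 j) us0; rewrite !mxE.
by rewrite mulf_eq0 (gt_eqF (s_gt0 j)) orbF => /eqP.
Qed.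

Lemma sum_sqr_sym_norm_adj_le v (m : nat) :
  (0 < deg adj v)%N -> (0 < m)%N -> (forall w, adj v w -> (m <= deg adj w)%N) ->
  \sum_j (sym_norm_adj R adj v j) ^+ 2 <= m%:R^-1.
Proof.
move=> deg_v_gt0 m_gt0 deg_nbr.
have deg_v : 0 < (deg adj v)%:R :> R by rewrite ltr0n.
apply: (@le_trans _ _ (\sum_j (adj v j)%:R / ((deg adj v)%:R * m%:R))).
  apply: ler_sum => j _; rewrite mxE.
  case adj_vj: (adj v j); last by rewrite !mul0r expr2 mul0r.
  have deg_j := deg_nbr j adj_vj.
  have deg_j_gt0 : (0 < deg adj j)%N := leq_trans m_gt0 deg_j.
  rewrite expr_div_n expr1n exprMn !sqr_sqrtr ?ler0n //.
  rewrite -[true%:R]/(1 : R) !mul1r lef_pV2 ?posrE ?mulr_gt0 ?ltr0n //.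
  by rewrite ler_pM2l // ler_nat.
by rewrite -big_distrl /= sum_adj_deg invfM mulrA divff ?gt_eqF // mul1r.
Qed.

End SymNormAdj.

Theorem mainTheorem15 (R : realType) (n : nat) (adj : rel 'I_n) :
  simple_graph adj -> connected_graph adj -> (3 <= n)%N ->
  (forall l : R, eigenvalue (nlap R adj) l -> 1 / 2 < `|1 - l|) ->
  forall v : 'I_n, exists2 w : 'I_n, adj v w & (deg adj w <= 3)%N.
Proof.
move=> [adj_sym _] adj_conn n_ge3 eps_gt v.
have [/existsP[w /andP[adj_vw deg_w]]|] :=
  boolP [exists w, adj v w && (deg adj w <= 3)%N]; first by exists w.
rewrite negb_exists => /forallP deg_nbr_gt3; exfalso.
have deg_gt0 := connected_deg_gt0 adj_conn (ltnW n_ge3).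
have le_row : \sum_j (sym_norm_adj R adj v j) ^+ 2 <= 4%:R^-1.
  apply: sum_sqr_sym_norm_adj_le => // w adj_vw.
  by have := deg_nbr_gt3 w; rewrite adj_vw ltnNge.
have [k S_k le_k] :=
  symmetric_row_eigenvalue_sqr_le (trmx_sym_norm_adj R adj_sym) le_row.
have := eps_gt _ (eigenvalue_nlap_sym_norm_adj deg_gt0 S_k); rewrite subKr.
move: le_k; rewrite -real_normK ?num_real // => le_k lt_k.
have := normr_ge0 k; move: (`|k|) le_k lt_k => a; nra.
Qed.
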